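(* Let $-3<\gamma\le1$ and $0<\varepsilon\le1$. Let $\phi^\varepsilon(t,x)$ satisfy $\sup_{0\le t\le T}\{(1+t)^{5/4}\|\nabla_x\phi^\varepsilon(t)\|_{W^{1,\infty}_x}\}\le\delta$ with $\delta>0$ sufficiently small, and let $(X(\tau;t,x,v),V(\tau;t,x,v))$ be the characteristics $$\frac{\mathrm dX}{\mathrm d\tau}=\frac1\varepsilon V,\quad X(t;t,x,v)=x;\qquad\frac{\mathrm dV}{\mathrm d\tau}=-\nabla_x\phi^\varepsilon(\tau,X(\tau;t,x,v)),\quad V(t;t,x,v)=v.$$ Let $T_0>0$ be a sufficiently small fixed number. Then for $0\le\tau\le t\le\varepsilon^{1/2}T_0$ (within $[0,T]$), $$\frac1{2\varepsilon^3}|t-\tau|^3\le\Big|\det\Big(\frac{\partial X(\tau;t,x,v)}{\partial v}\Big)\Big|\le\frac2{\varepsilon^3}|t-\tau|^3 .$$ *)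

From HB Require Import structures.
From mathcomp Require Import all_boot all_order all_algebra.
From mathcomp Require Import all_classical all_reals all_analysis.
Set Implicit Arguments. Unset Strict Implicit. Unset Printing Implicit Defensive.
Import Order.TTheory GRing.Theory Num.Theory numFieldNormedType.Exports.
Local Open Scope ring_scope.

Definition grad_x {R : realType} (phi : R -> 'rV[R]_3 -> R) (t : R)
  (x : 'rV[R]_3) : 'rV[R]_3 :=
  (jacobian (fun y : 'rV[R]_3 => \row_(_ < 1) phi t y) x)^T.

Definition hess_x {R : realType} (phi : R -> 'rV[R]_3 -> R) (t : R)
  (x : 'rV[R]_3) : 'M[R]_3 :=
  jacobian (grad_x phi t) x.

(* ||nabla_x phi(t)||_{W^{1,oo}_x} <= c, i.e.
   sup_x |nabla phi(t,x)| + sup_y |nabla^2 phi(t,y)| <= c,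
   written equivalently as a bound for all pairs (x, y); |.| is the
   max-entry norm of MathComp-Analysis on vectors / matrices. *)
Definition W1inf_grad_le {R : realType} (phi : R -> 'rV[R]_3 -> R) (t c : R) :=
  forall x y : 'rV[R]_3, `|grad_x phi t x| + `|hess_x phi t y| <= c.

From HB Require Import structures.
From mathcomp Require Import all_boot all_order all_algebra.
From mathcomp Require Import all_classical all_reals all_analysis.
From mathcomp Require Import ring lra.
Import Order.TTheory GRing.Theory Num.Theory numFieldNormedType.Exports.
Local Open Scope ring_scope.
Local Open Scope classical_set_scope.

(* For t - tau <= sqrt eps * T0 the characteristics are almost free streaming:
   X(tau; t, x, v) ~ x - a v with a = (t - tau) / eps.  Since nabla phi is
   3 delta-Lipschitz, comparing two characteristics and bootstrapping on the
   maximal distance between them shows that v |-> X(tau) + a v is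
   (6 delta (t - tau)^2 / eps) a-Lipschitz, hence a/100-Lipschitz.  So every
   entry of dX/dv + a I is at most a/100, and the determinant of such a 3x3
   matrix lies between a^3/2 and 2 a^3 in absolute value. *)

Section mx_norm_entries.
Context {K : realDomainType}.

Lemma normr_entry_le {m n} (M : 'M[K]_(m, n)) i j : `|M i j| <= `|M|.
Proof.
rewrite [leRHS]/Num.Def.normr/= mx_normrE.
by apply: le_trans; last exact: (le_bigmax _ _ (i, j)).
Qed.

Lemma normr_mx_le {m n} (M : 'M[K]_(m, n)) (B : K) :
  0 <= B -> (forall i j, `|M i j| <= B) -> `|M| <= B.
Proof.
move=> B_ge0 MB; rewrite [leLHS]/Num.Def.normr/= mx_normrE.
by apply: bigmax_le => // -[i j] _; exact: MB.
Qed.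

Lemma normr_mulmx_le {m n p} (A : 'M[K]_(m, n)) (B : 'M[K]_(n, p)) :
  `|A *m B| <= n%:R * `|A| * `|B|.
Proof.
apply: normr_mx_le => [|i j]; first by rewrite !mulr_ge0.
rewrite mxE (le_trans (ler_norm_sum _ _ _)) //.
have AB k : `|A i k * B k j| <= `|A| * `|B|.
  by rewrite normrM ler_pM ?normr_entry_le.
rewrite (le_trans (ler_sum _ (fun k _ => AB k))) //.
by rewrite sumr_const card_ord mulr_natl mulrnAl.
Qed.

End mx_norm_entries.

Lemma det_mx33 (R : comNzRingType) (A : 'M[R]_3) : \det A =
  A 0 0 * (A 1 1 * A 2 2 - A 1 2 * A 2 1)
  - A 0 1 * (A 1 0 * A 2 2 - A 1 2 * A 2 0)
  + A 0 2 * (A 1 0 * A 2 1 - A 1 1 * A 2 0).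
Proof.
pose B (i j : nat) := A (inord i) (inord j).
have -> : A = \matrix_(i, j) B i j.
  by apply/matrixP => i j; rewrite mxE /B !inord_val.
rewrite (expand_det_row _ ord0) !big_ord_recr big_ord0 /= /cofactor.
rewrite !(expand_det_row _ ord0) !big_ord_recr !big_ord0 /= /cofactor.
rewrite !det_mx11 !mxE /= !expr0 !expr1 /=.
ring.
Qed.

Section det3_near_scalar.
Context {R : realFieldType}.
Implicit Types a b c d : R.

Lemma normrM_le {a b c d} : `|a| <= c -> `|b| <= d -> `|a * b| <= c * d.
Proof. by move=> ac bd; rewrite normrM ler_pM. Qed.

Let one_sub_itv {a} : `|a| <= 1/100 -> 9/10 <= 1 - a <= 11/10.
Proof. by rewrite ler_norml => /andP[? ?]; apply/andP; split; lra. Qed.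

Let minor_near_one {a b c d} :
  `|a| <= 1/100 -> `|b| <= 1/100 -> `|c| <= 1/100 -> `|d| <= 1/100 ->
  4/5 <= (a - 1) * (d - 1) - b * c <= 5/4.
Proof.
move=> /one_sub_itv/andP[a1 a2] sb sc /one_sub_itv/andP[d1 d2].
have -> : (a - 1) * (d - 1) = (1 - a) * (1 - d) by ring.
have lo : 9/10 * (9/10) <= (1 - a) * (1 - d) by apply: ler_pM; lra.
have hi : (1 - a) * (1 - d) <= 11/10 * (11/10) by apply: ler_pM; lra.
move: (normrM_le sb sc); rewrite ler_norml => /andP[? ?].
by apply/andP; split; lra.
Qed.

Let minor_small {a b c d} :
  `|a| <= 1/100 -> `|b| <= 1/100 -> `|c| <= 1/100 -> `|d| <= 1/100 ->
  `|a * (b - 1) - c * d| <= 1/50.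
Proof.
move=> sa sb sc sd; rewrite (le_trans (ler_normB _ _)) //.
have sb' : `|b - 1| <= 11/10 by rewrite (le_trans (ler_normB _ _)) // normr1; lra.
by have := normrM_le sa sb'; have := normrM_le sc sd; lra.
Qed.

Lemma det3_near_oppI_poly {x00 x01 x02 x10 x11 x12 x20 x21 x22 : R} :
  `|x00| <= 1/100 -> `|x01| <= 1/100 -> `|x02| <= 1/100 ->
  `|x10| <= 1/100 -> `|x11| <= 1/100 -> `|x12| <= 1/100 ->
  `|x20| <= 1/100 -> `|x21| <= 1/100 -> `|x22| <= 1/100 ->
  -2 <= (x00 - 1) * ((x11 - 1) * (x22 - 1) - x12 * x21)
        - x01 * (x10 * (x22 - 1) - x12 * x20)
        + x02 * (x10 * x21 - (x11 - 1) * x20) <= -1/2.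
Proof.
move=> s00 s01 s02 s10 s11 s12 s20 s21 s22.
have minor2 : `|x10 * x21 - (x11 - 1) * x20| <= 1/50.
  by rewrite -normrN opprB mulrC [x10 * _]mulrC minor_small.
have := normrM_le s01 (minor_small s10 s22 s12 s20).
have := normrM_le s02 minor2.
have := minor_near_one s11 s12 s21 s22.
move: (one_sub_itv s00) => {s00 s01 s02 s10 s11 s12 s20 s21 s22 minor2}.
have -> : x00 - 1 = - (1 - x00) by ring.
move: (1 - x00) ((x11 - 1) * _ - _) (x01 * _) (x02 * _) => a u p q.
rewrite mulNr !ler_norml => /andP[a1 a2] /andP[u1 u2] /andP[? ?] /andP[? ?].
have lo : 9/10 * (4/5) <= a * u by apply: ler_pM; lra.
have hi : a * u <= 11/10 * (5/4) by apply: ler_pM; lra.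
by apply/andP; split; lra.
Qed.

Lemma det_near_oppI {A : 'M[R]_3} :
  `|A + 1%:M| <= 1/100 -> 1/2 <= `|\det A| <= 2.
Proof.
move=> hA.
pose x i j := (A + 1%:M) i j.
have hx i j : `|x i j| <= 1/100 := le_trans (normr_entry_le (A + 1%:M) i j) hA.
have Ax i j : A i j = x i j - (i == j)%:R by rewrite /x !mxE addrK.
rewrite det_mx33 !Ax /= !subr0.
move: (det3_near_oppI_poly (hx 0 0) (hx 0 1) (hx 0 2) (hx 1 0) (hx 1 1) (hx 1 2)
  (hx 2 0) (hx 2 1) (hx 2 2)).
move: (_ - _ + _) => P /andP[lo hi].
by rewrite ler0_norm; [apply/andP; split; lra | lra].
Qed.

Lemma det_near_scalar {a : R} {J : 'M[R]_3} :
  0 <= a -> `|J + a%:M| <= a / 100 -> a ^+ 3 / 2 <= `|\det J| <= 2 * a ^+ 3.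
Proof.
rewrite le0r => /orP[/eqP-> | a_gt0] hJ.
  move: hJ; rewrite mul0r -scalemx1 scale0r addr0 normr_le0 => /eqP->.
  by rewrite det0 normr0 expr0n /= mul0r mulr0 lexx.
have near_oppI : `|a^-1 *: J + 1%:M| <= 1/100.
  have -> : a^-1 *: J + 1%:M = a^-1 *: (J + a%:M).
    by rewrite scalerDr scale_scalar_mx mulVf ?lt0r_neq0.
  by rewrite normrZ gtr0_norm ?invr_gt0 // mulrC ler_pdivrMr //; lra.
have -> : \det J = a ^+ 3 * \det (a^-1 *: J).
  by rewrite -detZ scalerA mulfV ?lt0r_neq0 // scale1r.
have /andP[lo hi] := det_near_oppI near_oppI.
rewrite normrM gtr0_norm ?exprn_gt0 //.
move: (a ^+ 3) (exprn_gt0 3 a_gt0) => b b_gt0.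
by apply/andP; split; nra.
Qed.

End det3_near_scalar.

Section mean_value.
Context {R : realType}.

Lemma mx_MVT_le {m n} (f df : R -> 'M[R]_(m, n)) (C : 'M[R]_(m, n)) (a b B : R) :
  a <= b -> {within `[a, b], continuous f} ->
  (forall x, x \in `]a, b[%R -> is_derive x 1 f (df x)) ->
  (forall x, x \in `]a, b[%R -> `|df x - C| <= B) ->
  `|f b - f a - (b - a) *: C| <= B * (b - a).
Proof.
move=> ab cf hd hB.
case: (ltgtP a b) ab => // [a_lt_b|->] _; last first.
  by rewrite !subrr scale0r subr0 normr0 mulr0.
have B_ge0 : 0 <= B := le_trans (normr_ge0 _) (hB _ (mid_in_itvoo a_lt_b)).
apply: normr_mx_le => [|i j]; first by rewrite mulr_ge0 // subr_ge0 ltW.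
have cfij : {within `[a, b], continuous (fun s => f s i j)}.
  move=> s; apply: (@continuous_comp (subspace `[a, b]) _ _ f (fun M => M i j)).
    exact: cf.
  exact: coord_continuous.
have dfij x : x \in `]a, b[%R -> is_derive x 1 (fun s => f s i j) (df x i j).
  move=> /hd[df1 df2]; apply: DeriveDef; first by move/derivable_mxP: df1; apply.
  by rewrite (derive_mx df1) in df2; rewrite -df2 mxE.
rewrite !mxE; have [c c_in ->] := MVT a_lt_b dfij cfij.
rewrite [X in X - _]mulrC -mulrBr normrM [`|b - a|]ger0_norm; last first.
  by rewrite subr_ge0 ltW.
rewrite mulrC ler_pM2r ?subr_gt0 //.
by have := le_trans (normr_entry_le (df c - C) i j) (hB _ c_in); rewrite !mxE.
Qed.

Lemma lipschitz_of_jacobian_le {m n} (g : 'rV[R]_m -> 'rV[R]_n) (K : R) :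
  (forall p, differentiable g p) -> (forall p, `|jacobian g p| <= K) ->
  forall y z, `|g y - g z| <= m%:R * K * `|y - z|.
Proof.
move=> dg gK y z.
pose p (s : R) := z + s *: (y - z).
have quotE s : (fun k : R => k^-1 *: (g (p (k *: 1 + s)) - g (p s))) =
    (fun k : R => k^-1 *: (g (k *: (y - z) + p s) - g (p s))).
  apply/funext => k; congr (_ *: (g _ - _)).
  have -> : k%:A = k by rewrite -[RHS]mulr1.
  by rewrite /p scalerDl addrCA.
have dgp s : is_derive s (1 : R) (g \o p) ('D_(y - z) g (p s)).
  apply: DeriveDef; first by rewrite /derivable quotE; exact: diff_derivable.
  by rewrite /derive quotE.
have := @mx_MVT_le _ _ (g \o p) (fun s => 'D_(y - z) g (p s)) 0 0 1
  (m%:R * K * `|y - z|) ler01.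
have p1 : p 1 = y by rewrite /p scale1r addrC subrK.
have p0 : p 0 = z by rewrite /p scale0r addr0.
rewrite scaler0 !subr0 mulr1 /= p1 p0; apply.
- apply: continuous_subspaceT => s; apply: differentiable_continuous.
  by apply/derivable1_diffP; have [] := dgp s.
- move=> s _; rewrite subr0 deriveEjacobian //.
  apply: le_trans (normr_mulmx_le _ _) _.
  by rewrite mulrAC; apply: ler_wpM2r => //; apply: ler_wpM2l.
Qed.

End mean_value.

Section jacobian_of_deviation.
Context {R : realType}.

Lemma derive_deviation_le {U : normedModType R} {f : U -> U} {a K : R} {v : U} (e : U) :
  differentiable f v ->
  (forall w, `|f w - f v + a *: (w - v)| <= K * `|w - v|) ->
  `|'D_e f v + a *: e| <= K * `|e|.
Proof.
move=> df dev.
have ball_closed := closed_closed_ball_ (x := - (a *: e)) (e := K * `|e|).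
suff : closed_ball_ Num.norm (- (a *: e)) (K * `|e|) ('D_e f v).
  by rewrite /closed_ball_ /= -opprD normrN addrC.
apply: (closed_cvg _ ball_closed _ _ (diff_derivable df : derivable f v e)).
near=> h.
have h_neq0 : h != 0 by near: h; exact: nbhs_dnbhs_neq.
rewrite /closed_ball_ /=.
have -> : - (a *: e) - h^-1 *: (f (h *: e + v) - f v) =
    - (h^-1 *: (f (h *: e + v) - f v + a *: ((h *: e + v) - v))).
  rewrite addrK [in RHS]scalerDr [in RHS]scalerA [in RHS]scalerA.
  by rewrite mulrAC mulVf // mul1r opprD addrC.
rewrite normrN normrZ normfV.
apply: le_trans (ler_wpM2l _ (dev _)) _; first by rewrite invr_ge0.
by rewrite addrK normrZ mulrCA mulKf ?normr_eq0.
Unshelve. all: by end_near.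
Qed.

Lemma jacobian_deviation_le {n} {f : 'rV[R]_n -> 'rV[R]_n} {a K : R} {v : 'rV[R]_n} :
  differentiable f v -> 0 <= K ->
  (forall w, `|f w - f v + a *: (w - v)| <= K * `|w - v|) ->
  `|jacobian f v + a%:M| <= K.
Proof.
move=> df K_ge0 dev; apply: normr_mx_le => // i j.
pose e : 'rV[R]_n := delta_mx 0 i.
have -> : (jacobian f v + a%:M) i j = ('D_e f v + a *: e) 0 j.
  by rewrite /jacobian !mxE deriveE // eqxx eq_sym mulr_natr.
apply: le_trans (normr_entry_le _ 0 j) _.
apply: le_trans (derive_deviation_le e df dev) _.
rewrite ler_piMr // normr_mx_le // => k l.
by rewrite !mxE; case: (_ && _); rewrite ?normr1 ?normr0.
Qed.

End jacobian_of_deviation.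

Definition characteristics {R : realType} {n} (eps T : R)
    (G : R -> 'rV[R]_n -> 'rV[R]_n) (X V : R -> R -> 'rV[R]_n -> 'rV[R]_n -> 'rV[R]_n) :=
  forall t x v, 0 <= t -> t <= T ->
    [/\ X t t x v = x, V t t x v = v,
        {within `[0, T], continuous (fun tau => X tau t x v)},
        {within `[0, T], continuous (fun tau => V tau t x v)} &
        forall tau, 0 < tau -> tau < T ->
          is_derive tau 1 (fun s => X s t x v) (eps^-1 *: V tau t x v) /\
          is_derive tau 1 (fun s => V s t x v) (- G tau (X tau t x v))].

Section characteristics_deviation.
Context {R : realType} {n : nat}.
Context {eps T L : R} {G : R -> 'rV[R]_n -> 'rV[R]_n}.
Context {X V : R -> R -> 'rV[R]_n -> 'rV[R]_n -> 'rV[R]_n}.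
Hypotheses (eps_gt0 : 0 < eps) (L_ge0 : 0 <= L).
Hypothesis G_lipschitz :
  forall r, 0 <= r -> r <= T -> forall y z, `|G r y - G r z| <= L * `|y - z|.
Hypothesis XV_char : characteristics eps T G X V.

Section two_characteristics.
Context {t : R} {x v w : 'rV[R]_n}.
Hypotheses (t_ge0 : 0 <= t) (t_le_T : t <= T).

Let dX r := X r t x v - X r t x w.
Let dV r := V r t x v - V r t x w.

Let char_v := XV_char t x v t_ge0 t_le_T.
Let char_w := XV_char t x w t_ge0 t_le_T.

Let sub_window {s : R} : 0 <= s -> `[s, t] `<=` `[0, T].
Proof. by move=> s_ge0; apply: subset_itv; rewrite bnd_simp. Qed.

Let in_window {s r : R} : 0 <= s -> r \in `]s, t[%R -> 0 < r /\ r < T.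
Proof.
move=> s_ge0; rewrite in_itv /= => /andP[s_lt_r r_lt_t].
by split; [exact: le_lt_trans s_lt_r | exact: lt_le_trans t_le_T].
Qed.

Let dX_cont {s : R} : 0 <= s -> {within `[s, t], continuous dX}.
Proof.
move=> s_ge0.
have cX : {within `[0, T], continuous dX}.
  by case: char_v => _ _ cXv _ _; case: char_w => _ _ cXw _ _ r; exact: continuousB (cXv r) (cXw r).
exact: continuous_subspaceW (sub_window s_ge0) cX.
Qed.

Let dV_cont {s : R} : 0 <= s -> {within `[s, t], continuous dV}.
Proof.
move=> s_ge0.
have cV : {within `[0, T], continuous dV}.
  by case: char_v => _ _ _ cVv _; case: char_w => _ _ _ cVw _ r; exact: continuousB (cVv r) (cVw r).
exact: continuous_subspaceW (sub_window s_ge0) cV.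
Qed.

Lemma velocity_deviation_le {s M : R} : 0 <= s -> s <= t ->
  (forall r, s <= r <= t -> `|dX r| <= M) ->
  `|dV s - (v - w)| <= L * M * (t - s).
Proof.
move=> s_ge0 s_le_t dX_le.
have dV_t : dV t = v - w.
  by rewrite /dV; case: char_v => _ -> _ _ _; case: char_w => _ -> _ _ _.
have := @mx_MVT_le _ _ _ dV (fun r => - G r (X r t x v) - - G r (X r t x w)) 0
  s t (L * M) s_le_t (dV_cont s_ge0).
rewrite dV_t scaler0 subr0 distrC; apply.
case: char_v => _ _ _ _ dv; case: char_w => _ _ _ _ dw.
- move=> r /(in_window s_ge0) [r_gt0 r_lt_T].
  by apply: is_deriveB; [case: (dv r r_gt0 r_lt_T) | case: (dw r r_gt0 r_lt_T)].
- move=> r r_in; have [r_gt0 r_lt_T] := in_window s_ge0 r_in.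
  rewrite subr0 opprK addrC distrC.
  apply: le_trans (G_lipschitz r (ltW r_gt0) (ltW r_lt_T) _ _) _.
  apply: ler_wpM2l => //; apply: dX_le.
  by move: r_in; rewrite in_itv /= => /andP[? ?]; apply/andP; split; apply: ltW.
Qed.

Lemma position_deviation_le {s M : R} : 0 <= s -> s <= t ->
  (forall r, s <= r <= t -> `|dX r| <= M) ->
  `|dX s + ((t - s) / eps) *: (v - w)| <= L * M * (t - s) ^+ 2 / eps.
Proof.
move=> s_ge0 s_le_t dX_le.
have M_ge0 : 0 <= M by apply: le_trans (dX_le s _); rewrite ?lexx.
have dX_t : dX t = 0.
  by rewrite /dX; case: char_v => -> _ _ _ _; case: char_w => -> _ _ _ _; rewrite subrr.
have := @mx_MVT_le _ _ _ dX (fun r => eps^-1 *: V r t x v - eps^-1 *: V r t x w)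
  (eps^-1 *: (v - w)) s t (eps^-1 * (L * M * (t - s))) s_le_t (dX_cont s_ge0).
rewrite dX_t sub0r -opprD normrN scalerA.
have -> : L * M * (t - s) ^+ 2 / eps = eps^-1 * (L * M * (t - s)) * (t - s) by ring.
apply; case: char_v => _ _ _ _ dv; case: char_w => _ _ _ _ dw.
- move=> r /(in_window s_ge0) [r_gt0 r_lt_T].
  by apply: is_deriveB; [case: (dv r r_gt0 r_lt_T) | case: (dw r r_gt0 r_lt_T)].
- move=> r r_in; have [r_gt0 _] := in_window s_ge0 r_in.
  move: r_in; rewrite in_itv /= => /andP[s_lt_r r_lt_t].
  rewrite -!scalerBr normrZ gtr0_norm ?invr_gt0 // ler_pM2l ?invr_gt0 //.
  have dX_le_r q : r <= q <= t -> `|dX q| <= M.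
    by case/andP=> r_le_q q_le_t; rewrite dX_le // (le_trans (ltW s_lt_r)).
  apply: le_trans (velocity_deviation_le (ltW r_gt0) (ltW r_lt_t) dX_le_r) _.
  apply: ler_wpM2l; first exact: mulr_ge0 L_ge0 M_ge0.
  by rewrite lerD2l lerN2 ltW.
Qed.

(* At a maximiser c of |dX| the quadratic error is at most |dX c| / 2, so it can be
   absorbed: this is the bootstrap that replaces Gronwall. *)
Lemma deviation_at_max_le {c : R} : 0 <= c -> c <= t ->
  L * (t - c) ^+ 2 / eps <= 1/2 ->
  (forall r, c <= r <= t -> `|dX r| <= `|dX c|) ->
  `|dX c| <= 2 * ((t - c) / eps) * `|v - w|.
Proof.
move=> c_ge0 c_le_t small dX_le.
have near_c := position_deviation_le c_ge0 c_le_t dX_le.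
have half : L * `|dX c| * (t - c) ^+ 2 / eps <= 1/2 * `|dX c|.
  have -> : L * `|dX c| * (t - c) ^+ 2 / eps = L * (t - c) ^+ 2 / eps * `|dX c|.
    by ring.
  by apply: ler_wpM2r.
have : `|dX c| <= `|dX c + ((t - c) / eps) *: (v - w)| + (t - c) / eps * `|v - w|.
  rewrite -[X in `|X| <= _](addrK (((t - c) / eps) *: (v - w))).
  rewrite (le_trans (ler_normB _ _)) // normrZ ger0_norm //.
  by rewrite divr_ge0 ?subr_ge0 // ltW.
lra.
Qed.

Lemma characteristics_deviation_le {tau : R} : 0 <= tau -> tau <= t ->
  L * (t - tau) ^+ 2 / eps <= 1/2 ->
  `|X tau t x v - X tau t x w + ((t - tau) / eps) *: (v - w)| <=
    2 * (L * (t - tau) ^+ 2 / eps) * ((t - tau) / eps) * `|v - w|.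
Proof.
move=> tau_ge0 tau_le_t small.
have normdX_cont : {within `[tau, t], continuous (fun r => `|dX r|)}.
  move=> r; apply: (@continuous_comp (subspace `[tau, t]) _ _ dX Num.norm).
    exact: dX_cont.
  exact: norm_continuous.
have [c c_in c_max] := EVT_max tau_le_t normdX_cont.
have /andP[tau_le_c c_le_t] : tau <= c <= t by rewrite in_itv in c_in.
have dX_le r : tau <= r <= t -> `|dX r| <= `|dX c|.
  by move=> r_in; apply: c_max; rewrite in_itv.
have tc_le : t - c <= t - tau by rewrite lerD2l lerN2.
have eps_inv_ge0 : 0 <= eps^-1 by rewrite invr_ge0 ltW.
have q_ge0 : 0 <= L * (t - tau) ^+ 2 / eps.
  exact: mulr_ge0 (mulr_ge0 L_ge0 (sqr_ge0 _)) eps_inv_ge0.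
have small_c : L * (t - c) ^+ 2 / eps <= 1/2.
  apply: le_trans small; apply: ler_wpM2r => //; apply: ler_wpM2l => //.
  by rewrite ler_sqr ?nnegrE ?subr_ge0.
have M_le : `|dX c| <= 2 * ((t - tau) / eps) * `|v - w|.
  apply: le_trans (deviation_at_max_le (le_trans tau_ge0 tau_le_c) c_le_t small_c _) _.
    by move=> r /andP[c_le_r r_le_t]; rewrite dX_le // (le_trans tau_le_c).
  by apply: ler_wpM2r => //; apply: ler_wpM2l => //; apply: ler_wpM2r.
apply: le_trans (position_deviation_le tau_ge0 tau_le_t dX_le) _.
have -> : L * `|dX c| * (t - tau) ^+ 2 / eps = L * (t - tau) ^+ 2 / eps * `|dX c|.
  by ring.
have -> : 2 * (L * (t - tau) ^+ 2 / eps) * ((t - tau) / eps) * `|v - w| =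
    L * (t - tau) ^+ 2 / eps * (2 * ((t - tau) / eps) * `|v - w|) by ring.
by apply: ler_wpM2l.
Qed.

End two_characteristics.

Lemma characteristics_jacobian_near {t tau : R} {x v : 'rV[R]_n} :
  0 <= tau -> tau <= t -> t <= T -> L * (t - tau) ^+ 2 / eps <= 1/2 ->
  differentiable (X tau t x) v ->
  `|jacobian (X tau t x) v + ((t - tau) / eps)%:M| <=
    2 * (L * (t - tau) ^+ 2 / eps) * ((t - tau) / eps).
Proof.
move=> tau_ge0 tau_le_t t_le_T small dXv.
have t_ge0 := le_trans tau_ge0 tau_le_t.
have q_ge0 : 0 <= L * (t - tau) ^+ 2 / eps.
  exact: divr_ge0 (mulr_ge0 L_ge0 (sqr_ge0 _)) (ltW eps_gt0).
have a_ge0 : 0 <= (t - tau) / eps.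
  by apply: divr_ge0; [rewrite subr_ge0 | exact: ltW].
apply: jacobian_deviation_le dXv _ _ => [|w].
  exact: mulr_ge0 (mulr_ge0 (ler0n _ 2) q_ge0) a_ge0.
exact: characteristics_deviation_le.
Qed.

End characteristics_deviation.


Lemma hess_x_le_W1inf {R : realType} {phi : R -> 'rV[R]_3 -> R} {t c : R} y :
  W1inf_grad_le phi t c -> `|hess_x phi t y| <= c.
Proof. by move=> /(_ y y); apply: le_trans; rewrite lerDr. Qed.

Lemma ler_div_powR1D {R : realType} (c p t : R) :
  0 <= c -> 0 <= p -> 0 <= t -> c / (1 + t) `^ p <= c.
Proof.
move=> c_ge0 p_ge0 t_ge0.
have w_ge1 : 1 <= (1 + t) `^ p.
  by rewrite -[X in X <= _](powRr0 (1 + t)); apply: ler_powR; rewrite ?lerDl.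
by rewrite ler_pdivrMr ?(lt_le_trans ltr01 w_ge1) // ler_peMr.
Qed.

Lemma short_time_ratio_le {R : realType} {eps delta d : R} :
  0 < eps -> 0 <= delta -> delta <= 1 -> 0 <= d -> d <= Num.sqrt eps / 25 ->
  3%:R * delta * d ^+ 2 / eps <= 1/200.
Proof.
move=> eps_gt0 delta_ge0 delta_le1 d_ge0 d_le.
have : d ^+ 2 <= (Num.sqrt eps / 25) ^+ 2.
  by rewrite ler_sqr ?nnegrE ?divr_ge0 ?sqrtr_ge0.
rewrite expr_div_n sqr_sqrtr ?(ltW eps_gt0) // ler_pdivrMr //.
by move: (d ^+ 2) (sqr_ge0 d) => d2 d2_ge0 d2_le; nra.
Qed.

Theorem lemma3p4 (R : realType) :
  exists delta0 : R, 0 < delta0 /\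
  exists T0 : R, 0 < T0 /\
  forall (gamma eps T delta : R) (phi : R -> 'rV[R]_3 -> R)
    (X V : R -> R -> 'rV[R]_3 -> 'rV[R]_3 -> 'rV[R]_3),
    -3 < gamma -> gamma <= 1 ->
    0 < eps -> eps <= 1 ->
    0 < delta -> delta <= delta0 -> 0 <= T ->
    (* regularity of the potential: C^2 in x, gradient and Hessian
       jointly continuous in (t, x) *)
    (forall t x, differentiable (phi t) x) ->
    (forall t x, differentiable (grad_x phi t) x) ->
    (forall tx : R * 'rV[R]_3,
       {for tx, continuous (fun p : R * 'rV[R]_3 => grad_x phi p.1 p.2)}) ->
    (forall tx : R * 'rV[R]_3,
       {for tx, continuous (fun p : R * 'rV[R]_3 => hess_x phi p.1 p.2)}) ->
    (* sup_{0<=t<=T} (1+t)^{5/4} ||nabla_x phi(t)||_{W^{1,oo}} <= delta *)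
    (forall t, 0 <= t -> t <= T ->
       W1inf_grad_le phi t (delta / (1 + t) `^ (5%:R / 4%:R))) ->
    (* (X, V)(tau; t, x, v) are the characteristics on [0, T] *)
    (forall t x v, 0 <= t -> t <= T ->
       [/\ X t t x v = x, V t t x v = v,
           {within `[0, T], continuous (fun tau => X tau t x v)},
           {within `[0, T], continuous (fun tau => V tau t x v)} &
           forall tau, 0 < tau -> tau < T ->
             is_derive tau 1 (fun s => X s t x v) (eps^-1 *: V tau t x v) /\
             is_derive tau 1 (fun s => V s t x v)
               (- grad_x phi tau (X tau t x v))]) ->
    (* the characteristics are differentiable in v *)
    (forall tau t x v, 0 <= tau -> tau <= t -> t <= T ->
       differentiable (X tau t x) v) ->
    forall tau t x v, 0 <= tau -> tau <= t -> t <= T ->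
      t <= Num.sqrt eps * T0 ->
      (2 * eps ^+ 3)^-1 * `|t - tau| ^+ 3 <= `|\det (jacobian (X tau t x) v)|
      /\ `|\det (jacobian (X tau t x) v)| <= 2 / eps ^+ 3 * `|t - tau| ^+ 3.
Proof.
exists 1; split; first exact: ltr01.
exists (1/25); split; first lra.
(* Not needed: the bounds on gamma, eps <= 1, 0 <= T, and every regularity
   assumption on phi except the differentiability of nabla phi. *)
move=> _ eps T delta phi X V _ _ eps_gt0 _ delta_gt0 delta_le1 _ _ dgrad _ _.
move=> decay XV dXv tau t x v tau_ge0 tau_le_t t_le_T t_small.
have grad_lipschitz r : 0 <= r -> r <= T -> forall y z,
    `|grad_x phi r y - grad_x phi r z| <= 3%:R * delta * `|y - z|.
  move=> r_ge0 r_le_T; apply: lipschitz_of_jacobian_le (dgrad r) _ => p.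
  apply: le_trans (hess_x_le_W1inf p (decay r r_ge0 r_le_T)) _.
  by apply: ler_div_powR1D; rewrite ?(ltW delta_gt0) ?divr_ge0.
have L_ge0 : 0 <= 3%:R * delta by rewrite mulr_ge0 // ltW.
have small : 3%:R * delta * (t - tau) ^+ 2 / eps <= 1/200.
  by apply: short_time_ratio_le; rewrite ?(ltW delta_gt0) ?subr_ge0 //; lra.
have half : 3%:R * delta * (t - tau) ^+ 2 / eps <= 1/2 by lra.
have J_dev := characteristics_jacobian_near eps_gt0 L_ge0 grad_lipschitz XV
  tau_ge0 tau_le_t t_le_T half (dXv tau t x v tau_ge0 tau_le_t t_le_T).
set a := (t - tau) / eps in J_dev *.
have a_ge0 : 0 <= a by rewrite divr_ge0 ?subr_ge0 // ltW.
have J_near : `|jacobian (X tau t x) v + a%:M| <= a / 100.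
  by apply: le_trans J_dev _; rewrite mulrC ler_pdivlMr //; nra.
have /andP[lo hi] := det_near_scalar a_ge0 J_near.
rewrite ger0_norm ?subr_ge0 //.
have -> : (2 * eps ^+ 3)^-1 * (t - tau) ^+ 3 = a ^+ 3 / 2.
  by rewrite /a expr_div_n; field; rewrite gt_eqF.
have -> : 2 / eps ^+ 3 * (t - tau) ^+ 3 = 2 * a ^+ 3.
  by rewrite /a expr_div_n; field; rewrite gt_eqF.
by split.
Qed.
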